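(* Let $M$ be a finite set of alternatives, $\mathcal{R}$ the set of weak preference orders on $M$, and $\varphi:\mathcal{R}\to\Delta(M)$ a mechanism. If $\varphi$ is strategyproof, then it is separation responsive.
   Context: A preference order is a complete, transitive relation $R$ on $M$; $a\,I\,b$ means $a\,R\,b$ and $b\,R\,a$; $a\,P\,b$ means $a\,R\,b$ and not $b\,R\,a$. Write $R$ as $M_1\,P\,\cdots\,P\,M_K$ where $(M_k)$ are the nonempty indifference classes ordered so that $a\,P\,b$ for $a\in M_k$, $b\in M_{k'}$, $k<k'$. For $A\subseteq M$, $\varphi_A(R)=\sum_{a\in A}(\varphi(R))_a$. A lottery $x$ first order-stochastically dominates $y$ at $R$ if $\sum_{j: j R a}x_j\ge\sum_{j: j R a}y_j$ for all $a\in M$. $\varphi$ is strategyproof if $\varphi(R)$ first order-stochastically dominates $\varphi(R')$ at $R$ for all $R,R'\in\mathcal{R}$. A separation is a pair $(R,R')$ such that, with $R=M_1\,P\,\cdots\,P\,M_K$, there are $\kappa\in\{1,\dots,K\}$ and a partition of $M_\kappa$ into disjoint nonempty $M_\kappa^1,M_\kappa^2$ with $R'=M_1\,P'\,\cdots\,P'\,M_{\kappa-1}\,P'\,M_\kappa^1\,P'\,M_\kappa^2\,P'\,M_{\kappa+1}\,P'\,\cdots\,P'\,M_K$ (indifference within each listed set). $\varphi$ is separation responsive if for every separation $(R,R')$, $\varphi_{M_\kappa^1}(R')\ge\varphi_{M_\kappa^1}(R)$ and $\varphi_{M_\kappa^2}(R')\le\varphi_{M_\kappa^2}(R)$. *)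

From HB Require Import structures.
From mathcomp Require Import all_boot all_order all_algebra.
Set Implicit Arguments. Unset Strict Implicit. Unset Printing Implicit Defensive.
Import Order.TTheory GRing.Theory Num.Theory.
Local Open Scope ring_scope.

(* A preference order: complete, transitive relation on M (R x y = "x R y"). *)
Definition pref_order (M : finType) (R : rel M) : Prop := total R /\ transitive R.

Definition lottery (F : realFieldType) (M : finType) (x : M -> F) : Prop :=
  (forall a, 0 <= x a) /\ \sum_(a : M) x a = 1.

Definition phiA (F : realFieldType) (M : finType) (x : M -> F) (A : {set M}) : F :=
  \sum_(a in A) x a.

Definition fosd (F : realFieldType) (M : finType) (R : rel M) (x y : M -> F) : Prop :=
  forall a : M, \sum_(j | R j a) y j <= \sum_(j | R j a) x j.

Definition strategyproof (F : realFieldType) (M : finType) (phi : rel M -> M -> F) : Prop :=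
  forall R R' : rel M, pref_order R -> pref_order R' -> fosd R (phi R) (phi R').

Definition indiff_class (M : finType) (R : rel M) (x : M) : {set M} :=
  [set y | R x y && R y x].

(* (R, R') is a separation, splitting the indifference class M_kappa = A :|: B
   into M_kappa^1 = A (placed strictly above) and M_kappa^2 = B. R' agrees with R
   everywhere except that no element of B is weakly preferred to an element of A:
   this is exactly the order M_1 P' ... P' M_kappa^1 P' M_kappa^2 P' ... P' M_K. *)
Definition separation (M : finType) (R R' : rel M) (A B : {set M}) : Prop :=
  [/\ A != set0, B != set0, [disjoint A & B],
      (exists x, A :|: B = indiff_class R x) &
      (forall x y, R' x y = R x y && ~~ ((x \in B) && (y \in A)))].

Definition separation_responsive (F : realFieldType) (M : finType)
  (phi : rel M -> M -> F) : Prop :=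
  forall (R R' : rel M) (A B : {set M}), pref_order R -> separation R R' A B ->
    phiA (phi R) A <= phiA (phi R') A /\ phiA (phi R') B <= phiA (phi R) B.

(** Comparing [phi R] with [phi R'] through first-order stochastic dominance
    at suitable alternatives yields four inequalities between masses of upper
    contour sets.  Let [W] be the weak upper contour set of the split class
    [A :|: B] and [U] its strict upper contour set.  The upper contour sets of
    [B] are [W] under both orders, so [phi R] and [phi R'] give [W] the same
    mass; under [R'] the upper contour set of [A] is [U :|: A], on which
    [phi R'] carries at least as much mass as [phi R]; and [U], being empty or
    an upper contour set of [R], gets at least as much mass under [phi R].
    Subtracting gives the two inequalities of separation responsiveness. *)

From mathcomp Require Import all_boot all_order all_algebra.
From mathcomp Require Import lra.

Set Implicit Arguments.
Unset Strict Implicit.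
Unset Printing Implicit Defensive.

Import Order.TTheory GRing.Theory Num.Theory.
Local Open Scope ring_scope.

Definition upset (M : finType) (R : rel M) (a : M) : {set M} :=
  [set j | R j a].

Definition strict_upset (M : finType) (R : rel M) (a : M) : {set M} :=
  [set j | R j a && ~~ R a j].

Lemma indiff_class_sub_upset (M : finType) (R : rel M) (w : M) :
  indiff_class R w \subset upset R w.
Proof. by apply/subsetP => j; rewrite !inE => /andP[]. Qed.

Lemma upset_setD_indiff_class (M : finType) (R : rel M) (w : M) :
  upset R w :\: indiff_class R w = strict_upset R w.
Proof.
by apply/setP => j; rewrite !inE; case: (R j w); rewrite ?andbT ?andbF.
Qed.

Section PrefOrder.

Variables (M : finType) (R : rel M).
Hypothesis Rpo : pref_order R.

Let Rtot : total R := proj1 Rpo.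
Let Rtr : transitive R := proj2 Rpo.

Lemma pref_refl : reflexive R.
Proof. by move=> x; have := Rtot x x; rewrite orbb. Qed.

Lemma indiff_classR w a j : a \in indiff_class R w -> R j a = R j w.
Proof.
rewrite inE => /andP[Rwa Raw].
by apply/idP/idP => [Rja | Rjw]; [exact: Rtr Rja Raw | exact: Rtr Rjw Rwa].
Qed.

Lemma indiff_class_indiff w x y :
  x \in indiff_class R w -> y \in indiff_class R w -> R x y.
Proof.
move=> xw yw; rewrite (indiff_classR _ yw).
by move: xw; rewrite inE => /andP[].
Qed.

Lemma indiff_class_between w x y z :
  x \in indiff_class R w -> z \in indiff_class R w -> R x y -> R y z ->
  y \in indiff_class R w.
Proof.
rewrite !inE => /andP[Rwx _] /andP[_ Rzw] Rxy Ryz.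
by rewrite (Rtr Rwx Rxy) (Rtr Ryz Rzw).
Qed.

Lemma upset_indiff w a : a \in indiff_class R w -> upset R a = upset R w.
Proof. by move=> aw; apply/setP => j; rewrite !inE (indiff_classR _ aw). Qed.

Lemma exists_pref_least (S : {set M}) :
  S != set0 -> exists2 u, u \in S & {in S, forall j, R j u}.
Proof.
case/set0Pn => s sS.
case: (arg_maxnP (fun u => #|upset R u|) sS) => u uS umax.
exists u => // j jS; apply: contraT => nRju.
have Ruj : R u j by have := Rtot j u; rewrite (negbTE nRju).
suff /proper_card ltuj : upset R u \proper upset R j.
  by have := umax j jS; rewrite /= leqNgt ltuj.
apply/properP; split.
  by apply/subsetP => k; rewrite !inE => Rku; exact: Rtr Rku Ruj.
by exists j; rewrite !inE ?pref_refl.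
Qed.

(* The strict upper contour set is closed upwards, so its least elements
   generate it. *)
Lemma strict_upset_eq0_or_upset w :
  strict_upset R w = set0 \/ exists u, strict_upset R w = upset R u.
Proof.
have [->|/exists_pref_least[u uU uleast]] := eqVneq (strict_upset R w) set0.
  by left.
right; exists u; apply/setP => j; rewrite [in RHS]inE.
apply/idP/idP => [/uleast // | Rju].
move: uU; rewrite !inE => /andP[Ruw nRwu].
rewrite (Rtr Rju Ruw); apply: contra nRwu => Rwj; exact: Rtr Rwj Rju.
Qed.

End PrefOrder.

Section Dominance.

Variables (F : realFieldType) (M : finType) (R : rel M) (x y : M -> F).

Lemma fosd_upset a : fosd R x y -> phiA y (upset R a) <= phiA x (upset R a).
Proof.
by move=> /(_ a); rewrite /phiA !(eq_bigl _ _ (in_set _)).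
Qed.

Lemma fosd_strict_upset w : pref_order R -> fosd R x y ->
  phiA y (strict_upset R w) <= phiA x (strict_upset R w).
Proof.
move=> Rpo xy; case: (strict_upset_eq0_or_upset Rpo w) => [-> | [u ->]].
  by rewrite /phiA !big_set0.
exact: fosd_upset.
Qed.

End Dominance.

Lemma phiA_sub_setD (F : realFieldType) (M : finType) (x : M -> F)
    (W S : {set M}) :
  S \subset W -> phiA x W = phiA x S + phiA x (W :\: S).
Proof. by move=> SW; rewrite /phiA (big_setID S) (setIidPr SW). Qed.

Section Separation.

Variables (M : finType) (R R' : rel M) (A B : {set M}) (w : M).
Hypotheses (Rpo : pref_order R) (dAB : [disjoint A & B])
  (ABw : A :|: B = indiff_class R w)
  (R'E : forall x y, R' x y = R x y && ~~ ((x \in B) && (y \in A))).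

Lemma mem_classA a : a \in A -> a \in indiff_class R w.
Proof. by rewrite -ABw inE => ->. Qed.

Lemma mem_classB b : b \in B -> b \in indiff_class R w.
Proof. by rewrite -ABw inE orbC => ->. Qed.

Lemma notinB_A a : a \in A -> a \notin B.
Proof. by move=> aA; rewrite (disjointFr dAB aA). Qed.

Lemma separation_pref_order : pref_order R'.
Proof.
have [Rtot Rtr] := Rpo.
have indiffBA u v : u \in B -> v \in A -> R v u.
  by move=> /mem_classB uw /mem_classA vw; exact: indiff_class_indiff uw.
split.
- move=> u v; rewrite !R'E.
  have [/andP[uB vA] | nBA] := boolP ((u \in B) && (v \in A)).
    by rewrite (indiffBA _ _ uB vA) (negbTE (notinB_A vA)) orbT.
  have [Ruv | nRuv] := boolP (R u v); first by [].
  have Rvu : R v u by have := Rtot u v; rewrite (negbTE nRuv).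
  rewrite Rvu /=; apply: contra nRuv => /andP[vB uA]; exact: indiffBA.
- move=> v u z; rewrite !R'E => /andP[Ruv nuv] /andP[Rvz nvz].
  rewrite (Rtr _ _ _ Ruv Rvz) /=; apply/negP => /andP[uB zA].
  have := indiff_class_between Rpo (mem_classB uB) (mem_classA zA) Ruv Rvz.
  rewrite -ABw inE => /orP[vA | vB].
    by rewrite uB vA in nuv.
  by rewrite vB zA in nvz.
Qed.

Lemma upset_separationB b : b \in B -> upset R' b = upset R w.
Proof.
move=> bB; rewrite -(upset_indiff Rpo (mem_classB bB)).
apply/setP => j; rewrite !inE R'E.
by case: (boolP (b \in A)) => [/notinB_A | _]; rewrite ?bB ?andbF ?andbT.
Qed.

Lemma upset_separationA a : a \in A -> upset R' a = upset R w :\: B.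
Proof.
move=> aA; rewrite -(upset_indiff Rpo (mem_classA aA)).
by apply/setP => j; rewrite !inE R'E aA andbT andbC.
Qed.

Lemma B_sub_upset : B \subset upset R w.
Proof.
by apply: subset_trans (indiff_class_sub_upset R w); rewrite -ABw subsetUr.
Qed.

Lemma A_sub_upset_setD : A \subset upset R w :\: B.
Proof.
apply/subsetP => a aA; rewrite inE notinB_A //.
by apply: (subsetP (indiff_class_sub_upset R w)); exact: mem_classA.
Qed.

Lemma upset_setD_separation : upset R w :\: B :\: A = strict_upset R w.
Proof. by rewrite setDDl setUC ABw upset_setD_indiff_class. Qed.

End Separation.

Theorem lemma3 (F : realFieldType) (M : finType) (phi : rel M -> M -> F) :
  (forall R : rel M, pref_order R -> lottery (phi R)) ->
  strategyproof phi -> separation_responsive phi.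
Proof.
move=> _ SP R R' A B Rpo [/set0Pn[a aA] /set0Pn[b bB] dAB [w ABw] R'E].
have R'po := separation_pref_order Rpo dAB ABw R'E.
have RR' := SP R R' Rpo R'po; have R'R := SP R' R R'po Rpo.
have mass_W_le := fosd_upset w RR'.
have mass_W_ge := fosd_upset b R'R.
have mass_UA_ge := fosd_upset a R'R.
have mass_U_le := fosd_strict_upset w Rpo RR'.
rewrite (upset_separationB Rpo dAB ABw R'E bB) in mass_W_ge.
rewrite (upset_separationA Rpo ABw R'E aA) in mass_UA_ge.
rewrite -(upset_setD_separation ABw) in mass_U_le.
rewrite !(phiA_sub_setD _ (B_sub_upset ABw)) in mass_W_le mass_W_ge mass_UA_ge.
rewrite !(phiA_sub_setD _ (A_sub_upset_setD dAB ABw)) in mass_W_le mass_W_ge mass_UA_ge.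
by split; lra.
Qed.
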